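(* (a) For every metric space $(X,d)$, every Banach contraction $T: X\to X$ is a PA-contraction. (b) There exist a metric space $(X,d)$ and a mapping $T: X \to X$ that is a PA-contraction but not a Banach contraction. Consequently, the class of PA-contractions strictly contains the class of Banach contractions.
   Context: $T^0$ denotes the identity and $T^{k+1}=T\circ T^k$. A mapping $T: X\to X$ on a metric space $(X,d)$ is a Banach contraction if there exists $\beta\in(0,1)$ with $d(Tx,Ty)\le \beta\, d(x,y)$ for all $x,y\in X$. It is a PA-contraction if there exist $\alpha\in(0,1)$ and $N\in\mathbb{N}$ such that for all $x,y\in X$ and all $n\ge N$, $\sum_{k=0}^{n-1} d(T^{k+1}x, T^{k+1}y) \le \alpha \sum_{k=0}^{n-1} d(T^k x, T^k y)$. *)

From Stdlib Require Import Reals.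
Open Scope R_scope.

Definition is_metric {X : Type} (d : X -> X -> R) : Prop :=
  (forall x y, 0 <= d x y) /\
  (forall x y, d x y = 0 <-> x = y) /\
  (forall x y, d x y = d y x) /\
  (forall x y z, d x z <= d x y + d y z).

Fixpoint iter {X : Type} (T : X -> X) (k : nat) (x : X) : X :=
  match k with
  | O => x
  | S k' => T (iter T k' x)
  end.

Fixpoint sum_lt (n : nat) (f : nat -> R) : R :=
  match n with
  | O => 0
  | S n' => sum_lt n' f + f n'
  end.

Definition banach_contraction {X : Type} (d : X -> X -> R) (T : X -> X) : Prop :=
  exists beta : R, 0 < beta < 1 /\ forall x y, d (T x) (T y) <= beta * d x y.

Definition PA_contraction {X : Type} (d : X -> X -> R) (T : X -> X) : Prop :=
  exists (alpha : R) (N : nat), 0 < alpha < 1 /\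
    forall x y (n : nat), (N <= n)%nat ->
      sum_lt n (fun k => d (iter T (S k) x) (iter T (S k) y))
      <= alpha * sum_lt n (fun k => d (iter T k x) (iter T k y)).

(** Part (a): summing the Banach inequality d(Tx', Ty') <= beta d(x', y') over the orbit
    points x' = T^k x, y' = T^k y gives the PA inequality with alpha = beta and N = 0.
    Part (b): on three points with the discrete metric, the map a -> b -> c -> c is
    nonexpansive and T^2 is constant. Hence for n >= 2 both orbit sums collapse, to
    d(Tx, Ty) on the left and d(x, y) + d(Tx, Ty) on the right, and nonexpansiveness
    gives the PA inequality with alpha = 1/2. Yet d(Ta, Tc) = d(b, c) = d(a, c), so no
    Banach constant exists. *)
From Stdlib Require Import Reals Lra Lia.
Open Scope R_scope.

Lemma sum_lt_le_mul (f g : nat -> R) (b : R) (n : nat) :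
  (forall k, g k <= b * f k) -> sum_lt n g <= b * sum_lt n f.
Proof.
  intros Hgf; induction n as [|n IHn]; simpl.
  - lra.
  - specialize (Hgf n); lra.
Qed.

Lemma sum_lt_stationary (f : nat -> R) (m n : nat) :
  (forall k, (m <= k)%nat -> f k = 0) -> (m <= n)%nat -> sum_lt n f = sum_lt m f.
Proof.
  intros Hf Hmn; induction Hmn as [|n Hmn IHn]; simpl.
  - reflexivity.
  - rewrite IHn, (Hf n Hmn); lra.
Qed.

Lemma metric_dist_refl {X : Type} (d : X -> X -> R) (x : X) :
  is_metric d -> d x x = 0.
Proof. intros (_ & Hsep & _); apply Hsep; reflexivity. Qed.

Lemma banach_contraction_PA_contraction {X : Type} (d : X -> X -> R) (T : X -> X) :
  banach_contraction d T -> PA_contraction d T.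
Proof.
  intros (beta & Hbeta & Hcontr); exists beta, 0%nat; split; [exact Hbeta|].
  intros x y n _; apply sum_lt_le_mul; intros k; apply Hcontr.
Qed.

Lemma isometric_pair_not_banach_contraction {X : Type} (d : X -> X -> R) (T : X -> X)
    (x y : X) :
  0 < d x y -> d (T x) (T y) = d x y -> ~ banach_contraction d T.
Proof.
  intros Hpos Hiso (beta & Hbeta & Hcontr); specialize (Hcontr x y).
  rewrite Hiso in Hcontr; nra.
Qed.

Section IterTwoConstant.

Variables (X : Type) (d : X -> X -> R) (T : X -> X).
Hypothesis d_metric : is_metric d.
Hypothesis T_nonexpansive : forall x y, d (T x) (T y) <= d x y.
Hypothesis T2_const : forall x y, T (T x) = T (T y).

Lemma iter_ge2_const (x y : X) (k : nat) : (2 <= k)%nat -> iter T k x = iter T k y.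
Proof. intros Hk; destruct k as [|[|k]]; [lia | lia | apply T2_const]. Qed.

Lemma iter_ge2_dist (x y : X) (k : nat) :
  (2 <= k)%nat -> d (iter T k x) (iter T k y) = 0.
Proof. intros Hk; rewrite (iter_ge2_const x y k Hk); apply metric_dist_refl, d_metric. Qed.

Lemma PA_contraction_of_iter2_const : PA_contraction d T.
Proof.
  exists (1/2), 2%nat; split; [lra|].
  intros x y n Hn.
  rewrite !(sum_lt_stationary _ 2 n) by (exact Hn || intros k Hk; apply iter_ge2_dist; lia).
  pose proof (iter_ge2_dist x y 2 (le_n 2)) as Hdist2; simpl in Hdist2 |- *.
  specialize (T_nonexpansive x y); lra.
Qed.

End IterTwoConstant.

Section DiscreteMetric.

Variables (X : Type) (X_eq_dec : forall x y : X, {x = y} + {x <> y}).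

Definition discrete_dist (x y : X) : R := if X_eq_dec x y then 0 else 1.

Lemma discrete_dist_metric : is_metric discrete_dist.
Proof.
  unfold is_metric, discrete_dist; split; [|split; [|split]].
  - intros x y; destruct (X_eq_dec x y); lra.
  - intros x y; destruct (X_eq_dec x y); split; intros; easy || lra.
  - intros x y; destruct (X_eq_dec x y), (X_eq_dec y x); congruence || reflexivity.
  - intros x y z; destruct (X_eq_dec x z), (X_eq_dec x y), (X_eq_dec y z);
      subst; try lra; congruence.
Qed.

Lemma discrete_dist_nonexpansive (T : X -> X) (x y : X) :
  discrete_dist (T x) (T y) <= discrete_dist x y.
Proof.
  unfold discrete_dist.
  destruct (X_eq_dec x y), (X_eq_dec (T x) (T y)); subst; try lra; congruence.
Qed.

End DiscreteMetric.

Inductive three := three_a | three_b | three_c.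

Definition three_eq_dec (x y : three) : {x = y} + {x <> y}.
Proof. decide equality. Defined.

Definition three_shift (x : three) : three :=
  match x with three_a => three_b | _ => three_c end.

Theorem theorem2 :
  (forall (X : Type) (d : X -> X -> R) (T : X -> X),
      is_metric d -> banach_contraction d T -> PA_contraction d T) /\
  (exists (X : Type) (d : X -> X -> R) (T : X -> X),
      is_metric d /\ PA_contraction d T /\ ~ banach_contraction d T).
Proof.
  split.
  - intros X d T _; apply banach_contraction_PA_contraction.
  - exists three, (discrete_dist three three_eq_dec), three_shift.
    split; [|split].
    + apply discrete_dist_metric.
    + apply PA_contraction_of_iter2_const.
      * apply discrete_dist_metric.
      * apply discrete_dist_nonexpansive.
      * intros [] []; reflexivity.
    + apply (isometric_pair_not_banach_contraction _ _ three_a three_c);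
        cbv; lra.
Qed.
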